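(* For any integers $Q,k\ge2$ there exists $\epsilon_{Q,k}>0$ such that for every $u\in\mathbb{R}^2$, there are at most four distinct elements $d\in\pm D_{Q!,k}$ for which $|u\cdot d-\frac ab|<\epsilon_{Q,k}$ for some non-zero coprime integers $a,b$ with $2\le b\le Q$. Moreover, the set of all such $d\in\pm D_{Q!,k}$ is centrally symmetric.
   Context: For positive integers $q,k$ with $k\ge2$, let $X_{q,k}=\prod_{j=1}^{k-1}(q^{k+j}+q^{k-j}+1)$ and let $D_{q,k}\subseteq\mathbb{Z}^2$ consist of the points $\frac{X_{q,k}}{q^{k+j}+q^{k-j}+1}\left(q^{k+j}-q^{k-j},\,-q^j-2q^k\right)$ for $j=1,\ldots,k-1$; $\pm D_{q,k}=\{\pm d: d\in D_{q,k}\}$. A set $S$ is centrally symmetric if $S=-S$. $u\cdot d$ is the dot product. *)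

From Stdlib Require Import Reals ZArith Arith List Lia.
Open Scope Z_scope.

Definition fac (q : Z) (k j : nat) : Z :=
  q ^ Z.of_nat (k + j) + q ^ Z.of_nat (k - j) + 1.

Definition Xqk (q : Z) (k : nat) : Z :=
  fold_right Z.mul 1 (map (fac q k) (seq 1 (k - 1))).

(* the j-th point of D_{q,k}:
   X/(q^(k+j)+q^(k-j)+1) * (q^(k+j) - q^(k-j), -q^j - 2 q^k)
   (the division is exact since the factor divides X) *)
Definition Dpt (q : Z) (k j : nat) : Z * Z :=
  let c := Xqk q k / fac q k j in
  (c * (q ^ Z.of_nat (k + j) - q ^ Z.of_nat (k - j)),
   c * (- q ^ Z.of_nat j - 2 * q ^ Z.of_nat k)).

Definition inD (q : Z) (k : nat) (d : Z * Z) : Prop :=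
  exists j : nat, (1 <= j <= k - 1)%nat /\ d = Dpt q k j.

Definition negpt (d : Z * Z) : Z * Z := (- fst d, - snd d).

Definition inPMD (q : Z) (k : nat) (d : Z * Z) : Prop :=
  inD q k d \/ inD q k (negpt d).

Definition dot (u : R * R) (d : Z * Z) : R :=
  (fst u * IZR (fst d) + snd u * IZR (snd d))%R.

Definition near_frac (Q : nat) (eps : R) (u : R * R) (d : Z * Z) : Prop :=
  exists a b : Z, a <> 0 /\ b <> 0 /\ Z.gcd a b = 1 /\
    2 <= b <= Z.of_nat Q /\ (Rabs (dot u d - IZR a / IZR b) < eps)%R.

Definition goodset (Q k : nat) (eps : R) (u : R * R) (d : Z * Z) : Prop :=
  inPMD (Z.of_nat (fact Q)) k d /\ near_frac Q eps u d.

(* For indices i < j < l the points d_i, d_j, d_l of D_{q,k} satisfy the Cramer relation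
   det(d_j,d_l) d_i - det(d_i,d_l) d_j + det(d_i,d_j) d_l = 0.  If each u.d_m is within
   eps of a fraction a_m/b_m with b_m <= Q, then with q = Q! the integers
   n_m = a_m (q / b_m) are not divisible by q and, for eps small enough, satisfy the same
   relation exactly.  Now d_m = c_m v_m where c_m = X / (q^(k+m) + q^(k-m) + 1) is a unit
   modulo q; the minor det(v_i,v_l) is q^(k+i-l) times a unit modulo q, while the other
   two minors are divisible by q^(k+i-l+1).  Reducing the relation modulo q^(k+i-l+1)
   gives q | n_j, a contradiction.  So at most two indices are good, which leaves at most
   four points of +-D; goodness is clearly invariant under d |-> -d. *)

From Stdlib Require Import Reals ZArith Znumtheory Arith List Lia Lra Classical.
Import ListNotations.
Open Scope Z_scope.

Definition det (x y : Z * Z) : Z := fst x * snd y - snd x * fst y.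

Definition scale (c : Z) (d : Z * Z) : Z * Z := (c * fst d, c * snd d).

Lemma det_scale (c c' : Z) (x y : Z * Z) :
  det (scale c x) (scale c' y) = c * c' * det x y.
Proof. unfold det, scale; cbn [fst snd]; ring. Qed.

Definition dir (q : Z) (k j : nat) : Z * Z :=
  (q ^ Z.of_nat (k + j) - q ^ Z.of_nat (k - j), - q ^ Z.of_nat j - 2 * q ^ Z.of_nat k).

Definition cofactor (q : Z) (k j : nat) : Z := Xqk q k / fac q k j.

Lemma Dpt_scale_dir (q : Z) (k j : nat) : Dpt q k j = scale (cofactor q k j) (dir q k j).
Proof. reflexivity. Qed.

Lemma pow_of_nat_add (q : Z) (m n : nat) :
  q ^ Z.of_nat (m + n) = q ^ Z.of_nat m * q ^ Z.of_nat n.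
Proof. rewrite Nat2Z.inj_add; apply Z.pow_add_r; lia. Qed.

Lemma pow_of_nat_divide (q : Z) (m n : nat) :
  (m <= n)%nat -> (q ^ Z.of_nat m | q ^ Z.of_nat n).
Proof.
  intros Hmn; replace n with (m + (n - m))%nat by lia.
  rewrite pow_of_nat_add; apply Z.divide_factor_l.
Qed.

(* Of the six monomials of [det (dir a) (dir b)], [- q ^ (k + a - b)] has the
   strictly smallest exponent. *)
Lemma det_dir (q : Z) (k a b : nat) : (a < b <= k)%nat ->
  exists w, det (dir q k a) (dir q k b) = q ^ Z.of_nat (k + a - b) * (q * w - 1).
Proof.
  intros Hab.
  destruct (ltac:(exists (b - a - 1)%nat, (k - b)%nat; lia) :
    exists p n, b = (a + p + 1)%nat /\ k = (a + p + 1 + n)%nat) as [p [n [-> ->]]].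
  set (A := q ^ Z.of_nat a); set (P := q ^ Z.of_nat p); set (N := q ^ Z.of_nat n).
  exists (- 2 * A ^ 2 * P ^ 2 * N * q + P ^ 2 * q + 2 * P ^ 2 * N * q
          + 2 * A ^ 2 * P ^ 3 * N * q ^ 2 - 2 * P * N).
  unfold det, dir; cbn [fst snd].
  replace (a + p + 1 + n + a - (a + p + 1))%nat with (a + n)%nat by lia.
  replace (a + p + 1 + n + a)%nat with (a + a + p + n + 1)%nat by lia.
  replace (a + p + 1 + n - a)%nat with (p + n + 1)%nat by lia.
  replace (a + p + 1 + n + (a + p + 1))%nat with (a + a + p + p + n + 1 + 1)%nat by lia.
  replace (a + p + 1 + n - (a + p + 1))%nat with n by lia.
  rewrite !pow_of_nat_add, Z.pow_1_r; fold A P N.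
  ring.
Qed.

Lemma divide_fold_mul (x : Z) (l : list Z) : In x l -> (x | fold_right Z.mul 1 l).
Proof.
  induction l as [|y l IH]; cbn [In fold_right]; [contradiction|].
  intros [<- | Hx]; [apply Z.divide_factor_l|].
  apply Z.divide_mul_r, IH, Hx.
Qed.

Lemma fold_mul_1mod (q : Z) (l : list Z) :
  (forall x, In x l -> (q | x - 1)) -> (q | fold_right Z.mul 1 l - 1).
Proof.
  induction l as [|y l IH]; intros Hl; cbn [fold_right].
  - exists 0; ring.
  - replace (y * fold_right Z.mul 1 l - 1)
      with ((y - 1) * fold_right Z.mul 1 l + (fold_right Z.mul 1 l - 1)) by ring.
    apply Z.divide_add_r.
    + apply Z.divide_mul_l, Hl; left; reflexivity.
    + apply IH; intros x Hx; apply Hl; right; exact Hx.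
Qed.

Lemma fac_1mod (q : Z) (k j : nat) : (j < k)%nat -> (q | fac q k j - 1).
Proof.
  intros Hjk; unfold fac.
  replace (k + j)%nat with (1 + (k + j - 1))%nat by lia.
  replace (k - j)%nat with (1 + (k - j - 1))%nat by lia.
  rewrite !pow_of_nat_add, Z.pow_1_r.
  exists (q ^ Z.of_nat (k + j - 1) + q ^ Z.of_nat (k - j - 1)); ring.
Qed.

Lemma Xqk_1mod (q : Z) (k : nat) : (q | Xqk q k - 1).
Proof.
  apply fold_mul_1mod; intros x Hx.
  apply in_map_iff in Hx as [j [<- Hj]]; apply in_seq in Hj.
  apply fac_1mod; lia.
Qed.

Lemma fac_pos (q : Z) (k j : nat) : 0 <= q -> 0 < fac q k j.
Proof.
  intros Hq; unfold fac.
  pose proof (Z.pow_nonneg q (Z.of_nat (k + j)) Hq).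
  pose proof (Z.pow_nonneg q (Z.of_nat (k - j)) Hq); lia.
Qed.

(* The cofactor times [fac] is [Xqk], which is [1] modulo [q]. *)
Lemma rel_prime_cofactor (q : Z) (k j : nat) : 0 <= q -> (1 <= j <= k - 1)%nat ->
  rel_prime q (cofactor q k j).
Proof.
  intros Hq Hj.
  assert (Hdiv : (fac q k j | Xqk q k)).
  { apply divide_fold_mul, in_map, in_seq; lia. }
  destruct (Xqk_1mod q k) as [t Ht].
  apply bezout_rel_prime; exists (- t) (fac q k j).
  unfold cofactor; rewrite Z.mul_comm, <- Zdivide_Zdiv_eq by auto using fac_pos.
  lia.
Qed.

Lemma rel_prime_mul_sub_1 (q w : Z) : rel_prime q (q * w - 1).
Proof. apply bezout_rel_prime; exists w (-1); ring. Qed.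

(* Modulo [q ^ (k + i - l + 1)] only the middle term of the relation survives. *)
Lemma Dpt_relation_divide_middle (q : Z) (k i j l : nat) (ni nj nl : Z) :
  0 < q -> (1 <= i)%nat -> (i < j < l)%nat -> (l < k)%nat ->
  det (Dpt q k j) (Dpt q k l) * ni - det (Dpt q k i) (Dpt q k l) * nj
    + det (Dpt q k i) (Dpt q k j) * nl = 0 ->
  (q | nj).
Proof.
  intros Hq Hi Hijl Hlk Hrel.
  rewrite !Dpt_scale_dir, !det_scale in Hrel.
  set (e := (k + i - l)%nat).
  destruct (det_dir q k i l) as [w Hil]; [lia|].
  assert (Hjl : (q ^ Z.of_nat (e + 1) | det (dir q k j) (dir q k l))).
  { destruct (det_dir q k j l) as [w' ->]; [lia|].
    apply Z.divide_mul_l, pow_of_nat_divide; lia. }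
  assert (Hij : (q ^ Z.of_nat (e + 1) | det (dir q k i) (dir q k j))).
  { destruct (det_dir q k i j) as [w' ->]; [lia|].
    apply Z.divide_mul_l, pow_of_nat_divide; lia. }
  set (ci := cofactor q k i) in *; set (cj := cofactor q k j) in *;
    set (cl := cofactor q k l) in *.
  assert (Hmain : (q ^ Z.of_nat e * q | q ^ Z.of_nat e * (ci * cl * (q * w - 1) * nj))).
  { replace (q ^ Z.of_nat e * (ci * cl * (q * w - 1) * nj))
      with (cj * cl * det (dir q k j) (dir q k l) * ni
            + ci * cj * det (dir q k i) (dir q k j) * nl)
      by (rewrite Hil in Hrel; fold e in Hrel; lia).
    rewrite pow_of_nat_add, Z.pow_1_r in Hjl, Hij.
    apply Z.divide_add_r; apply Z.divide_mul_l, Z.divide_mul_r; assumption. }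
  apply Z.mul_divide_cancel_l in Hmain; [|apply Z.pow_nonzero; lia].
  apply Gauss in Hmain; [exact Hmain|].
  repeat apply rel_prime_mult;
    (apply rel_prime_mul_sub_1 || apply rel_prime_cofactor; lia).
Qed.

Lemma divide_fact (b n : nat) : (1 <= b <= n)%nat -> Nat.divide b (fact n).
Proof.
  induction n as [|n IH]; intros Hb; [lia|].
  cbn [fact]; destruct (Nat.eq_dec b (S n)) as [->|Hne].
  - apply Nat.divide_factor_l.
  - apply Nat.divide_mul_r, IH; lia.
Qed.

Lemma not_divide_mul_coprime (a b c : Z) : c <> 0 -> Z.gcd a b = 1 -> 2 <= b ->
  ~ (b * c | a * c).
Proof.
  intros Hc Hgcd Hb Hdiv.
  apply Z.mul_divide_cancel_r in Hdiv; [|exact Hc].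
  assert (Hb1 : (b | 1)) by (rewrite <- Hgcd; apply Z.gcd_greatest; auto using Z.divide_refl).
  apply Z.divide_1_r in Hb1; lia.
Qed.

Lemma near_frac_scaled (Q : nat) (eps : R) (u : R * R) (d : Z * Z) :
  near_frac Q eps u d ->
  let q := Z.of_nat (fact Q) in
  exists n, ~ (q | n) /\ (Rabs (IZR q * dot u d - IZR n) < IZR q * eps)%R.
Proof.
  intros [a [b [_ [_ [Hgcd [Hb Happrox]]]]]] q.
  assert (Hq : 0 < q) by (pose proof (lt_O_fact Q); lia).
  destruct (divide_fact (Z.to_nat b) Q) as [c Hc]; [lia|].
  assert (Hqbc : q = b * Z.of_nat c) by (unfold q; rewrite Hc, Nat2Z.inj_mul, Z2Nat.id; lia).
  exists (a * Z.of_nat c); split.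
  - rewrite Hqbc; apply not_divide_mul_coprime; lia.
  - replace (IZR (a * Z.of_nat c)) with (IZR q * (IZR a / IZR b))%R
      by (rewrite Hqbc, !mult_IZR; field; apply not_0_IZR; lia).
    rewrite <- Rmult_minus_distr_l, Rabs_mult, Rabs_pos_eq by (apply IZR_le; lia).
    apply Rmult_lt_compat_l; [apply IZR_lt|]; assumption.
Qed.

Section Rounding.

Local Open Scope R_scope.

Lemma dot_cramer (u : R * R) (x y z : Z * Z) :
  IZR (det y z) * dot u x - IZR (det x z) * dot u y + IZR (det x y) * dot u z = 0.
Proof. unfold dot, det; rewrite !minus_IZR, !mult_IZR; ring. Qed.

Lemma Rabs_mul_le (c e K r : R) : Rabs c <= K -> Rabs e < r -> Rabs (c * e) <= K * r.
Proof.
  intros Hc He; rewrite Rabs_mult.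
  apply Rmult_le_compat; auto using Rabs_pos, Rlt_le.
Qed.

Lemma Rabs_IZR_lt_1 (n : Z) : Rabs (IZR n) < 1 -> n = 0%Z.
Proof. intros H; rewrite <- abs_IZR in H; apply lt_IZR in H; lia. Qed.

(* The integer combination differs from [q] times the vanishing real one
   [dot_cramer] by less than [1]. *)
Lemma cramer_rounding (u : R * R) (q K : Z) (r : R) (x y z : Z * Z) (nx ny nz : Z) :
  (Z.abs (det y z) <= K)%Z -> (Z.abs (det x z) <= K)%Z -> (Z.abs (det x y) <= K)%Z ->
  3 * IZR K * r < 1 ->
  Rabs (IZR q * dot u x - IZR nx) < r ->
  Rabs (IZR q * dot u y - IZR ny) < r ->
  Rabs (IZR q * dot u z - IZR nz) < r ->
  (det y z * nx - det x z * ny + det x y * nz)%Z = 0%Z.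
Proof.
  intros Hyz Hxz Hxy Hr Hx Hy Hz.
  apply Rabs_IZR_lt_1.
  set (ex := IZR q * dot u x - IZR nx) in Hx; set (ey := IZR q * dot u y - IZR ny) in Hy;
    set (ez := IZR q * dot u z - IZR nz) in Hz.
  replace (IZR (det y z * nx - det x z * ny + det x y * nz))
    with (- (IZR (det y z) * ex) + IZR (det x z) * ey + - (IZR (det x y) * ez)).
  2: { rewrite plus_IZR, minus_IZR, !mult_IZR.
       transitivity (IZR (det y z) * IZR nx - IZR (det x z) * IZR ny + IZR (det x y) * IZR nz
         - IZR q * (IZR (det y z) * dot u x - IZR (det x z) * dot u y + IZR (det x y) * dot u z)).
       - unfold ex, ey, ez; ring.
       - rewrite dot_cramer; ring. }
  assert (HK : forall c, (Z.abs c <= K)%Z -> Rabs (IZR c) <= IZR K)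
    by (intros c Hc; rewrite <- abs_IZR; apply IZR_le, Hc).
  pose proof (Rabs_mul_le _ _ _ _ (HK _ Hyz) Hx).
  pose proof (Rabs_mul_le _ _ _ _ (HK _ Hxz) Hy).
  pose proof (Rabs_mul_le _ _ _ _ (HK _ Hxy) Hz).
  pose proof (Rabs_triang (- (IZR (det y z) * ex) + IZR (det x z) * ey) (- (IZR (det x y) * ez))).
  pose proof (Rabs_triang (- (IZR (det y z) * ex)) (IZR (det x z) * ey)).
  rewrite !Rabs_Ropp in *; lra.
Qed.

End Rounding.

Definition norm1 (d : Z * Z) : Z := Z.abs (fst d) + Z.abs (snd d).

Lemma det_le_norm1 (x y : Z * Z) : Z.abs (det x y) <= norm1 x * norm1 y.
Proof.
  destruct x as [x1 x2], y as [y1 y2]; unfold det, norm1; cbn [fst snd].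
  pose proof (Z.abs_sub_triangle (x1 * y2) (x2 * y1)).
  rewrite !Z.abs_mul in *.
  pose proof (Z.abs_nonneg x1); pose proof (Z.abs_nonneg x2);
    pose proof (Z.abs_nonneg y1); pose proof (Z.abs_nonneg y2).
  assert (0 <= Z.abs x1 * Z.abs y1) by (apply Z.mul_nonneg_nonneg; lia).
  assert (0 <= Z.abs x2 * Z.abs y2) by (apply Z.mul_nonneg_nonneg; lia).
  lia.
Qed.

Lemma le_fold_max {A : Type} (f : A -> Z) (l : list A) (x : A) :
  In x l -> f x <= fold_right Z.max 0 (map f l).
Proof.
  induction l as [|y l IH]; cbn [In map fold_right]; [contradiction|].
  intros [<- | Hx]; [lia|]; specialize (IH Hx); lia.
Qed.

Definition Dbound (q : Z) (k : nat) : Z :=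
  fold_right Z.max 0 (map (fun j => norm1 (Dpt q k j)) (seq 1 (k - 1))).

Lemma det_Dpt_le (q : Z) (k i j : nat) : (1 <= i <= k - 1)%nat -> (1 <= j <= k - 1)%nat ->
  Z.abs (det (Dpt q k i) (Dpt q k j)) <= Dbound q k * Dbound q k.
Proof.
  intros Hi Hj.
  assert (Hn : forall m, (1 <= m <= k - 1)%nat -> 0 <= norm1 (Dpt q k m) <= Dbound q k).
  { intros m Hm; split; [unfold norm1; lia|].
    apply (le_fold_max (fun j => norm1 (Dpt q k j))), in_seq; lia. }
  pose proof (Hn i Hi); pose proof (Hn j Hj).
  eapply Z.le_trans; [apply det_le_norm1|]; apply Z.mul_le_mono_nonneg; lia.
Qed.

Definition approx_eps (Q k : nat) : R :=
  let q := Z.of_nat (fact Q) in / IZR (3 * q * (Dbound q k * Dbound q k) + 1).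

Lemma approx_eps_spec (Q k : nat) :
  let q := Z.of_nat (fact Q) in
  (0 < approx_eps Q k)%R /\
  (3 * IZR (Dbound q k * Dbound q k) * (IZR q * approx_eps Q k) < 1)%R.
Proof.
  intros q; unfold approx_eps; fold q.
  set (K := Dbound q k * Dbound q k).
  assert (HK : 0 <= 3 * q * K) by (pose proof (lt_O_fact Q); unfold K; nia).
  assert (Hpos : (0 < IZR (3 * q * K + 1))%R) by (apply IZR_lt; lia).
  split; [apply Rinv_0_lt_compat, Hpos|].
  replace (3 * IZR K * (IZR q * / IZR (3 * q * K + 1)))%R
    with (IZR (3 * q * K) / IZR (3 * q * K + 1))%R by (rewrite !mult_IZR; field; lra).
  apply (Rmult_lt_reg_r (IZR (3 * q * K + 1))); [exact Hpos|].
  unfold Rdiv; rewrite Rmult_assoc, Rinv_l, Rmult_1_r, Rmult_1_l by lra.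
  apply IZR_lt; lia.
Qed.

Lemma no_three_near_frac (Q k : nat) (u : R * R) (i j l : nat) :
  (1 <= i)%nat -> (i < j < l)%nat -> (l <= k - 1)%nat ->
  let q := Z.of_nat (fact Q) in
  near_frac Q (approx_eps Q k) u (Dpt q k i) ->
  near_frac Q (approx_eps Q k) u (Dpt q k j) ->
  near_frac Q (approx_eps Q k) u (Dpt q k l) -> False.
Proof.
  intros Hi Hijl Hlk q Ni Nj Nl.
  destruct (near_frac_scaled _ _ _ _ Ni) as [ni [_ Hni]].
  destruct (near_frac_scaled _ _ _ _ Nj) as [nj [Hq_nj Hnj]].
  destruct (near_frac_scaled _ _ _ _ Nl) as [nl [_ Hnl]].
  destruct (approx_eps_spec Q k) as [_ Hsmall].
  apply Hq_nj, (Dpt_relation_divide_middle q k i j l ni nj nl);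
    [pose proof (lt_O_fact Q); lia | lia..|].
  apply (cramer_rounding u q (Dbound q k * Dbound q k) (IZR q * approx_eps Q k));
    auto; apply det_Dpt_le; lia.
Qed.

Lemma covered_by_two (P : nat -> Prop) :
  (forall i j l, (i < j < l)%nat -> P i -> P j -> P l -> False) ->
  exists a b, forall m, P m -> m = a \/ m = b.
Proof.
  intros Hno3.
  assert (Hdistinct : forall a b c, a <> b -> a <> c -> b <> c -> P a -> P b -> P c -> False).
  { intros a b c Hab Hac Hbc Pa Pb Pc.
    destruct (Nat.lt_total a b) as [|[|]], (Nat.lt_total b c) as [|[|]],
      (Nat.lt_total a c) as [|[|]];
      first [ lia
            | exact (Hno3 a b c ltac:(lia) Pa Pb Pc) | exact (Hno3 a c b ltac:(lia) Pa Pc Pb)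
            | exact (Hno3 b a c ltac:(lia) Pb Pa Pc) | exact (Hno3 b c a ltac:(lia) Pb Pc Pa)
            | exact (Hno3 c a b ltac:(lia) Pc Pa Pb) | exact (Hno3 c b a ltac:(lia) Pc Pb Pa) ]. }
  destruct (classic (exists a, P a)) as [[a Pa]|Hnone].
  - destruct (classic (exists b, P b /\ b <> a)) as [[b [Pb Hba]]|Hone].
    + exists a, b; intros m Pm.
      destruct (Nat.eq_dec m a) as [|Hma]; [left; assumption|].
      destruct (Nat.eq_dec m b) as [|Hmb]; [right; assumption|].
      exfalso; apply (Hdistinct a b m); auto.
    + exists a, a; intros m Pm; left.
      apply NNPP; intros Hma; apply Hone; exists m; auto.
  - exists 0%nat, 0%nat; intros m Pm; exfalso; apply Hnone; exists m; exact Pm.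
Qed.

Lemma negpt_involutive (d : Z * Z) : negpt (negpt d) = d.
Proof. destruct d as [x y]; unfold negpt; cbn [fst snd]; f_equal; ring. Qed.

Lemma near_frac_negpt (Q : nat) (eps : R) (u : R * R) (d : Z * Z) :
  near_frac Q eps u d -> near_frac Q eps u (negpt d).
Proof.
  intros [a [b [Ha [Hb [Hgcd [Hbq Happrox]]]]]].
  exists (- a), b; repeat split; try lia; [rewrite Z.gcd_opp_l; exact Hgcd|].
  replace (dot u (negpt d) - IZR (- a) / IZR b)%R with (- (dot u d - IZR a / IZR b))%R.
  - rewrite Rabs_Ropp; exact Happrox.
  - unfold dot, negpt; cbn [fst snd]; rewrite !opp_IZR; field; apply not_0_IZR; exact Hb.
Qed.

Lemma goodset_index (Q k : nat) (eps : R) (u : R * R) (d : Z * Z) :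
  goodset Q k eps u d ->
  let q := Z.of_nat (fact Q) in
  exists m, ((1 <= m <= k - 1)%nat /\ near_frac Q eps u (Dpt q k m)) /\
    (d = Dpt q k m \/ d = negpt (Dpt q k m)).
Proof.
  intros [[[m [Hm ->]] | [m [Hm Hd]]] Hnear] q.
  - exists m; auto.
  - exists m; fold q in Hd; rewrite <- Hd, negpt_involutive.
    split; [split; [exact Hm | apply near_frac_negpt; exact Hnear] | right; reflexivity].
Qed.

Theorem lemma6 (Q k : nat) (HQ : (2 <= Q)%nat) (Hk : (2 <= k)%nat) :
  exists eps : R, (0 < eps)%R /\
    forall u : R * R,
      (forall l : list (Z * Z),
          NoDup l -> (forall d, In d l -> goodset Q k eps u d) -> (length l <= 4)%nat) /\
      (forall d : Z * Z, goodset Q k eps u d -> goodset Q k eps u (negpt d)).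
Proof.
  exists (approx_eps Q k); split; [apply approx_eps_spec|].
  intros u; set (q := Z.of_nat (fact Q)); split.
  - intros l Hnodup Hgood.
    destruct (covered_by_two
                (fun m => (1 <= m <= k - 1)%nat /\ near_frac Q (approx_eps Q k) u (Dpt q k m)))
      as [a [b Hab]].
    { intros i j m Hijm [Hi Ni] [_ Nj] [Hm Nm].
      exact (no_three_near_frac Q k u i j m ltac:(lia) Hijm ltac:(lia) Ni Nj Nm). }
    change 4%nat with (length [Dpt q k a; negpt (Dpt q k a); Dpt q k b; negpt (Dpt q k b)]).
    apply NoDup_incl_length; [exact Hnodup|]; intros d Hd.
    destruct (goodset_index _ _ _ _ _ (Hgood d Hd)) as [m [Hm Hdm]].
    destruct (Hab m Hm) as [-> | ->], Hdm as [-> | ->]; cbn [In]; tauto.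
  - intros d [Hpm Hnear]; split; [|apply near_frac_negpt, Hnear].
    destruct Hpm as [H | H]; [right; rewrite negpt_involutive | left]; exact H.
Qed.
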